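(* Let $A$ be a commutative ring. The assignment $\epsilon(a)\mapsto w_{21}(-1)x_{21}(a)$ ($a\in A$) induces a well-defined group isomorphism $\gamma:C(A)\to\mathrm{St}(2,A)/C(2,A)$. Furthermore, the restriction of $\gamma$ to $U(A)$ induces an isomorphism $U(A)\cong K_2(2,A)/C(2,A)$.
   Context: $C(A)$ is the group with generators $\epsilon(a)$, $a\in A$, and relations: with $h(u):=\epsilon(-u)\epsilon(-u^{-1})\epsilon(-u)$ for $u\in A^\times$, (1) $h(u)h(v)=h(uv)$; (2) $\epsilon(a)\epsilon(0)\epsilon(b)=h(-1)\epsilon(a+b)$; (3) $h(u)\epsilon(a)h(u)=\epsilon(u^2a)$. $U(A)$ is the kernel of the homomorphism $C(A)\to\mathrm{SL}_2(A)$, $\epsilon(a)\mapsto\begin{pmatrix}a&1\\-1&0\end{pmatrix}$. $\mathrm{St}(2,A)$ is the group generated by $x_{12}(t),x_{21}(t)$, $t\in A$, with relations $x_{ij}(s)x_{ij}(t)=x_{ij}(s+t)$ and $w_{ij}(u)x_{ij}(t)w_{ij}(-u)=x_{ji}(-u^{-2}t)$ ($u\in A^\times$), where $w_{ij}(u):=x_{ij}(u)x_{ji}(-u^{-1})x_{ij}(u)$. $\phi:\mathrm{St}(2,A)\to\mathrm{SL}_2(A)$ sends $x_{12}(t)\mapsto\begin{pmatrix}1&t\\0&1\end{pmatrix}$, $x_{21}(t)\mapsto\begin{pmatrix}1&0\\t&1\end{pmatrix}$, and $K_2(2,A)=\ker\phi$. With $h_{12}(u)=w_{12}(u)w_{12}(-1)$,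 the symbols $c(u,v)=h_{12}(u)h_{12}(v)h_{12}(uv)^{-1}$ ($u,v\in A^\times$) are central in $\mathrm{St}(2,A)$, and $C(2,A)$ is the subgroup they generate. *)

From HB Require Import structures.
From mathcomp Require Import all_boot all_order all_algebra.
Set Implicit Arguments. Unset Strict Implicit. Unset Printing Implicit Defensive.
Import GRing.Theory.
Local Open Scope ring_scope.

(* A word over the alphabet X: a letter (x, false) stands for x, (x, true) for x^-1. *)
Definition word (X : Type) := seq (X * bool).

Definition letter (X : Type) (x : X) : word X := [:: (x, false)].

Definition inv_word (X : Type) (w : word X) : word X :=
  rev (map (fun p => (p.1, ~~ p.2)) w).

(* The congruence on words generated by free cancellation and a set of relations
   [R l r] (meaning l = r).  Words modulo [pres_eqv R] form the group
   < X | R >. *)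
Inductive pres_eqv (X : Type) (R : word X -> word X -> Prop) : word X -> word X -> Prop :=
| pe_refl w : pres_eqv R w w
| pe_sym w w' : pres_eqv R w w' -> pres_eqv R w' w
| pe_trans w1 w2 w3 : pres_eqv R w1 w2 -> pres_eqv R w2 w3 -> pres_eqv R w1 w3
| pe_free p q x b : pres_eqv R (p ++ (x, b) :: (x, ~~ b) :: q) (p ++ q)
| pe_rel p q l r : R l r -> pres_eqv R (p ++ l ++ q) (p ++ r ++ q).

Definition mx_eval (A : comUnitRingType) (X : Type) (f : X -> 'M[A]_2) (w : word X) : 'M[A]_2 :=
  foldr (fun p m => (if p.2 then invmx (f p.1) else f p.1) *m m) 1%:M w.

Definition mx2 (A : comUnitRingType) (a b c d : A) : 'M[A]_2 :=
  \matrix_(i < 2, j < 2)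
    if (i == 0 :> nat) then (if (j == 0 :> nat) then a else b)
    else (if (j == 0 :> nat) then c else d).

Section Groups.
Variable A : comUnitRingType.

Definition epsw (a : A) : word A := letter a.

Definition hC (u : A) : word A := epsw (- u) ++ epsw (- u^-1) ++ epsw (- u).

Definition C_rel (l r : word A) : Prop :=
  (exists u v : A, u \is a GRing.unit /\ v \is a GRing.unit /\
     l = hC u ++ hC v /\ r = hC (u * v))
  \/ (exists a b : A, l = epsw a ++ epsw 0 ++ epsw b /\ r = hC (-1) ++ epsw (a + b))
  \/ (exists (u : A) (a : A), u \is a GRing.unit /\
     l = hC u ++ epsw a ++ hC u /\ r = epsw (u ^+ 2 * a)).

Definition C_eqv : word A -> word A -> Prop := pres_eqv C_rel.

Definition eps_mx (a : A) : 'M[A]_2 := mx2 a 1 (-1) 0.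
Definition C_to_SL2 (w : word A) : 'M[A]_2 := mx_eval eps_mx w.

Definition in_U (w : word A) : Prop := C_to_SL2 w = 1%:M.

(* generator (true, t) = x_12(t), (false, t) = x_21(t) *)
Definition xw (ij : bool) (t : A) : word (bool * A) := letter (ij, t).

Definition ww (ij : bool) (u : A) : word (bool * A) :=
  xw ij u ++ xw (~~ ij) (- u^-1) ++ xw ij u.

Definition St_rel (l r : word (bool * A)) : Prop :=
  (exists (ij : bool) (s t : A), l = xw ij s ++ xw ij t /\ r = xw ij (s + t))
  \/ (exists (ij : bool) (u t : A), u \is a GRing.unit /\
       l = ww ij u ++ xw ij t ++ ww ij (- u) /\ r = xw (~~ ij) (- (u ^- 2) * t)).

Definition St_eqv : word (bool * A) -> word (bool * A) -> Prop := pres_eqv St_rel.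

Definition x_mx (g : bool * A) : 'M[A]_2 :=
  if g.1 then mx2 1 g.2 0 1 else mx2 1 0 g.2 1.
Definition phi_St (w : word (bool * A)) : 'M[A]_2 := mx_eval x_mx w.

Definition in_K2 (w : word (bool * A)) : Prop := phi_St w = 1%:M.

Definition h12 (u : A) : word (bool * A) := ww true u ++ ww true (-1).
Definition cw (u v : A) : word (bool * A) := h12 u ++ h12 v ++ inv_word (h12 (u * v)).

(* words that are products of symbols c(u,v) (u, v units) and their inverses:
   these represent exactly the elements of the subgroup C(2,A) of St(2,A) *)
Definition C2_word (c : word (bool * A)) : Prop :=
  exists s : seq ((A * A) * bool),
    all (fun p => (p.1.1 \is a GRing.unit) && (p.1.2 \is a GRing.unit)) s /\
    c = flatten (map (fun p => if p.2 then inv_word (cw p.1.1 p.1.2)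
                               else cw p.1.1 p.1.2) s).

(* equality in St(2,A)/C(2,A): w C(2,A) = w' C(2,A), i.e. w = w' c with c in C(2,A) *)
Definition StC_eqv (w w' : word (bool * A)) : Prop :=
  exists c, C2_word c /\ St_eqv w (w' ++ c).

Definition gamma_gen (a : A) : word (bool * A) := ww false (-1) ++ xw false a.
Definition gamma (w : word A) : word (bool * A) :=
  flatten (map (fun p => if p.2 then inv_word (gamma_gen p.1) else gamma_gen p.1) w).

End Groups.

(* Two evaluations of words do all the work.  In any group generated by
   elements x_ij(t) satisfying the Steinberg relations, the elements
   gamma(a) = w_21(-1) x_21(a) satisfy the three defining relations of C(A) up
   to central products of symbols c(u,v); for instance
   h(u) h(v) = h(uv) c(-1,-1)^-1 c(u,v) with h(u) = gamma(-u) gamma(-u^-1) gamma(-u).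
   So gamma is well defined modulo C(2,A).  Conversely, in any group generated
   by elements eps(a) satisfying the relations of C(A), the elements
   eps(-t) eps(0)^-1 and eps(0)^-1 eps(t) satisfy the Steinberg relations, kill
   every symbol c(u,v), and send w_21(-1) x_21(a) back to eps(a).  The resulting
   map delta : St(2,A) -> C(A) is a left inverse of gamma, and gamma delta is the
   identity on the generators x_ij(t), so gamma is bijective.  Both maps commute
   with the projections to SL_2(A), whence U(A) corresponds to K_2(2,A). *)

From HB Require Import structures.
From mathcomp Require Import all_boot all_order all_algebra.
From mathcomp Require Import boolp ring.
Set Implicit Arguments. Unset Strict Implicit. Unset Printing Implicit Defensive.
Import GRing.Theory.
Local Open Scope ring_scope.

(** * Words and presented groups *)

Section Words.
Variable X : Type.
Implicit Types u v w : word X.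

Lemma inv_word_cat u v : inv_word (u ++ v) = inv_word v ++ inv_word u.
Proof. by rewrite /inv_word map_cat rev_cat. Qed.

Lemma inv_wordK : involutive (@inv_word X).
Proof.
move=> w; rewrite /inv_word map_rev revK -map_comp -[RHS]map_id.
by apply: eq_map => -[x b] /=; rewrite negbK.
Qed.

Variable R : word X -> word X -> Prop.
Local Notation eqv := (pres_eqv R).

Lemma pres_eqv_ctx p q u v : eqv u v -> eqv (p ++ u ++ q) (p ++ v ++ q).
Proof.
elim=> {u v} [w | w w' _ | w1 w2 w3 _ h12 _ h23 | p0 q0 x b | p0 q0 l r hlr].
- exact: pe_refl.
- exact: pe_sym.
- exact: pe_trans h23.
- by have := pe_free R (p ++ p0) (q0 ++ q) x b; rewrite -!catA.
- by have := pe_rel (p ++ p0) (q0 ++ q) hlr; rewrite -!catA.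
Qed.

Lemma pres_eqv_cat u u' v v' : eqv u u' -> eqv v v' -> eqv (u ++ v) (u' ++ v').
Proof.
move=> /(pres_eqv_ctx [::] v) /= huu' /(pres_eqv_ctx u' [::]); rewrite !cats0.
exact: pe_trans.
Qed.

Lemma pres_eqv_catV w : eqv (w ++ inv_word w) [::].
Proof.
elim: w => [|[x b] w IH]; first exact: pe_refl.
rewrite -cat1s inv_word_cat -catA (catA w).
apply: pe_trans (pres_eqv_ctx [:: (x, b)] [:: (x, ~~ b)] IH) _.
exact: (pe_free R [::] [::] x b).
Qed.

Lemma pres_eqv_Vcat w : eqv (inv_word w ++ w) [::].
Proof. by have := pres_eqv_catV (inv_word w); rewrite inv_wordK. Qed.

Lemma pres_eqv_inv u v : eqv u v -> eqv (inv_word u) (inv_word v).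
Proof.
move=> huv.
have := pres_eqv_ctx (inv_word u) [::] (pres_eqv_catV v); rewrite !cats0 => /pe_sym h.
apply: pe_trans h (pe_trans (pe_sym (pres_eqv_ctx _ _ huv)) _).
by have := pres_eqv_ctx [::] (inv_word v) (pres_eqv_Vcat u); rewrite -catA.
Qed.
End Words.

Section Substitution.
Variables (X Y : Type) (g : X -> word Y).

Definition subst_word (w : word X) : word Y :=
  flatten (map (fun p => if p.2 then inv_word (g p.1) else g p.1) w).

Lemma subst_word_cat u v : subst_word (u ++ v) = subst_word u ++ subst_word v.
Proof. by rewrite /subst_word map_cat flatten_cat. Qed.

Lemma subst_word_inv w : subst_word (inv_word w) = inv_word (subst_word w).
Proof.
elim: w => [|[x b] w IHw] //; rewrite -cat1s inv_word_cat !subst_word_cat IHw.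
by rewrite inv_word_cat /subst_word /= !cats0; case: b; rewrite ?inv_wordK.
Qed.
End Substitution.

Section Central.
Local Open Scope group_scope.
Variable G : groupType.
Implicit Types g y z : G.

Definition central z := forall g, commute z g.

Lemma central1 : central 1.
Proof. by move=> g; apply/commute_sym/commute1. Qed.

Lemma centralM y z : central y -> central z -> central (y * z).
Proof. by move=> cy cz g; apply/commute_sym/commuteM; apply/commute_sym. Qed.

Lemma centralV z : central z -> central z^-1.
Proof. by move=> cz g; apply/commute_sym/commuteV/commute_sym. Qed.

Lemma commute_of_conjg z g : g ^ z = g -> commute z g.
Proof. by move=> h; rewrite /commute (conjgC g z) h. Qed.
End Central.

Section Evaluation.
Local Open Scope group_scope.
Variables (X : Type) (G : groupType) (f : X -> G).

Definition eval_letter (p : X * bool) : G := if p.2 then (f p.1)^-1 else f p.1.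
Definition eval_word (w : word X) : G := \prod_(p <- w) eval_letter p.

Lemma eval_word_cat u v : eval_word (u ++ v) = eval_word u * eval_word v.
Proof. exact: big_cat. Qed.

Lemma eval_word_nil : eval_word [::] = 1.
Proof. exact: big_nil. Qed.

Lemma eval_word_cons p w : eval_word (p :: w) = eval_letter p * eval_word w.
Proof. exact: big_cons. Qed.

Lemma eval_word_letter x : eval_word (letter x) = f x.
Proof. exact: big_seq1. Qed.

Lemma eval_word_inv w : eval_word (inv_word w) = (eval_word w)^-1.
Proof.
elim: w => [|[x b] w IHw]; first by rewrite eval_word_nil invg1.
rewrite -cat1s inv_word_cat !eval_word_cat IHw invgM; congr (_ * _).
by rewrite /= !eval_word_cons !eval_word_nil !mulg1 /eval_letter; case: b; rewrite ?invgK.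
Qed.

Lemma eval_word_free p q x b :
  eval_word (p ++ (x, b) :: (x, ~~ b) :: q) = eval_word (p ++ q).
Proof.
by rewrite !eval_word_cat !eval_word_cons /eval_letter; case: b; rewrite /= ?mulKg ?mulVKg.
Qed.

Lemma eval_word_eqv (R : word X -> word X -> Prop) :
  (forall l r, R l r -> eval_word l = eval_word r) ->
  forall u v, pres_eqv R u v -> eval_word u = eval_word v.
Proof.
move=> evalR u v.
elim=> {u v} [w | w w' _ -> | w1 w2 w3 _ -> _ -> | p q x b | p q l r /evalR] //.
  exact: eval_word_free.
by rewrite !eval_word_cat => ->.
Qed.
Lemma eval_word_eq1 (P : pred (X * bool)) w : all P w ->
  (forall p, P p -> eval_letter p = 1) -> eval_word w = 1.
Proof.
move=> + P1; elim: w => [|p w IHw] /=; first by rewrite eval_word_nil.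
by case/andP=> /P1 p1 /IHw w1; rewrite eval_word_cons p1 w1 mulg1.
Qed.

Lemma central_eval_word (P : pred (X * bool)) w : all P w ->
  (forall p, P p -> central (eval_letter p)) -> central (eval_word w).
Proof.
move=> + Pc; elim: w => [|p w IHw] /=; first by rewrite eval_word_nil => _; apply: central1.
by case/andP=> /Pc cp /IHw cw; rewrite eval_word_cons; apply: centralM.
Qed.
End Evaluation.

Lemma eq_eval_word (X : Type) (G : groupType) (f f' : X -> G) :
  f =1 f' -> eval_word f =1 eval_word f'.
Proof. by move=> ff' w; apply: eq_bigr => -[x b] _; rewrite /eval_letter ff'. Qed.

Lemma eval_word_subst (X Y : Type) (G : groupType) (f : Y -> G) (g : X -> word Y) w :
  eval_word f (subst_word g w) = eval_word (fun x => eval_word f (g x)) w.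
Proof.
elim: w => [|[x b] w IHw]; first by rewrite !eval_word_nil.
rewrite -cat1s subst_word_cat !eval_word_cat IHw eval_word_cons !eval_word_nil !mulg1.
by rewrite /eval_letter /=; case: b; rewrite ?eval_word_inv.
Qed.

Section PresentedGroup.
Variables (X : choiceType) (R : word X -> word X -> Prop).
Local Notation eqv := (pres_eqv R).

(* [pres_eqv R] is undecidable: the classical reflection [`[< _ >]] turns it
   into the boolean equivalence relation that [generic_quotient] divides by. *)
Definition pres_rel : rel (word X) := fun u v => `[< eqv u v >].

Lemma pres_rel_refl : reflexive pres_rel.
Proof. by move=> u; apply/asboolP/pe_refl. Qed.

Lemma pres_rel_sym : symmetric pres_rel.
Proof. by move=> u v; apply/asboolP/asboolP => /pe_sym. Qed.

Lemma pres_rel_trans : transitive pres_rel.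
Proof. by move=> v u w /asboolP huv /asboolP hvw; apply/asboolP/(pe_trans huv hvw). Qed.

Canonical pres_equiv := EquivRel pres_rel pres_rel_refl pres_rel_sym pres_rel_trans.

Definition presented := {eq_quot pres_equiv}%qT.
HB.instance Definition _ := Choice.on presented.
HB.instance Definition _ := Quotient.on presented.
HB.instance Definition _ := EqQuotient.on presented.

Definition wclass (w : word X) : presented := (\pi_presented w)%qT.

Lemma wclass_eqP u v : wclass u = wclass v <-> eqv u v.
Proof. by split=> [/eqquotP/asboolP | h]; last apply/eqquotP/asboolP. Qed.

(* Locked, as otherwise a pattern [wclass _] would match any product. *)
Fact pres_mul_key : unit. Proof. by []. Qed.
Definition pres_mul := locked_with pres_mul_key
  (fun g h : presented => wclass (repr g ++ repr h)).
Canonical pres_mul_unlockable := [unlockable fun pres_mul].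
Definition pres_one := wclass [::].
Fact pres_inv_key : unit. Proof. by []. Qed.
Definition pres_inv := locked_with pres_inv_key
  (fun g : presented => wclass (inv_word (repr g))).
Canonical pres_inv_unlockable := [unlockable fun pres_inv].

Lemma repr_wclass u : eqv (repr (wclass u)) u.
Proof. by apply/wclass_eqP; rewrite /wclass reprK. Qed.

Lemma pres_mulE u v : pres_mul (wclass u) (wclass v) = wclass (u ++ v).
Proof. by rewrite unlock; apply/wclass_eqP/pres_eqv_cat; apply: repr_wclass. Qed.

Lemma pres_invE u : pres_inv (wclass u) = wclass (inv_word u).
Proof. by rewrite unlock; apply/wclass_eqP/pres_eqv_inv/repr_wclass. Qed.

Lemma wclass_ind (P : presented -> Prop) : (forall w, P (wclass w)) -> forall g, P g.
Proof. by move=> Pw g; rewrite -[g]reprK; apply: Pw. Qed.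

Lemma pres_mulA : associative pres_mul.
Proof.
elim/wclass_ind=> u; elim/wclass_ind=> v; elim/wclass_ind=> w.
by rewrite (pres_mulE v) (pres_mulE u v) !pres_mulE catA.
Qed.

Lemma pres_mul1g : left_id pres_one pres_mul.
Proof. by elim/wclass_ind=> u; rewrite pres_mulE. Qed.

Lemma pres_mulg1 : right_id pres_one pres_mul.
Proof. by elim/wclass_ind=> u; rewrite pres_mulE cats0. Qed.

Lemma pres_mulVg : left_inverse pres_one pres_inv pres_mul.
Proof.
by elim/wclass_ind=> u; rewrite pres_invE pres_mulE; apply/wclass_eqP/pres_eqv_Vcat.
Qed.

Lemma pres_mulgV : right_inverse pres_one pres_inv pres_mul.
Proof.
by elim/wclass_ind=> u; rewrite pres_invE pres_mulE; apply/wclass_eqP/pres_eqv_catV.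
Qed.

HB.instance Definition _ := isGroup.Build presented
  pres_mulA pres_mul1g pres_mulg1 pres_mulVg pres_mulgV.

Local Open Scope group_scope.

Lemma wclass_cat u v : wclass (u ++ v) = wclass u * wclass v.
Proof. by rewrite -pres_mulE. Qed.

Lemma wclass_nil : wclass [::] = 1.
Proof. by []. Qed.

Lemma wclass_inv w : wclass (inv_word w) = (wclass w)^-1.
Proof. by rewrite -pres_invE. Qed.

Lemma wclass_rel l r : R l r -> wclass l = wclass r.
Proof. by move=> Rlr; apply/wclass_eqP; have := pe_rel [::] [::] Rlr; rewrite !cats0. Qed.

Lemma wclass_eval w : wclass w = eval_word (fun x => wclass (letter x)) w.
Proof.
elim: w => [|[x b] w IHw]; first by rewrite eval_word_nil.
rewrite -cat1s wclass_cat IHw eval_word_cons /eval_letter.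
by case: b; rewrite // -wclass_inv.
Qed.

Lemma wclass_subst (Y : Type) (g : Y -> word X) w :
  wclass (subst_word g w) = eval_word (fun y => wclass (g y)) w.
Proof.
by rewrite wclass_eval eval_word_subst; apply: eq_eval_word => y; rewrite -wclass_eval.
Qed.

Lemma presented_ind (P : presented -> Prop) :
  P 1 -> (forall x, P (wclass (letter x))) ->
  (forall g h, P g -> P h -> P (g * h)) -> (forall g, P g -> P g^-1) ->
  forall g, P g.
Proof.
move=> P1 Px PM PV; elim/wclass_ind=> w; rewrite wclass_eval.
by apply: big_ind => // -[x b] _; rewrite /eval_letter; case: b => /=; auto.
Qed.
End PresentedGroup.

(** * Consequences of the Steinberg relations *)

Section Steinberg.
Local Open Scope group_scope.
Variables (A : comUnitRingType) (G : groupType) (x : bool -> A -> G).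
Implicit Types (u v s t a b : A) (ij : bool).

(* Products are locked so that rewriting with [mulgA] cannot unfold them. *)
Fact weyl_key : unit. Proof. by []. Qed.
Definition weyl := locked_with weyl_key
  (fun ij u => x ij u * x (~~ ij) (- u^-1)%R * x ij u).
Canonical weyl_unlockable := [unlockable fun weyl].
Lemma weylE ij u : weyl ij u = x ij u * x (~~ ij) (- u^-1)%R * x ij u.
Proof. by rewrite unlock. Qed.

Fact hdiag_key : unit. Proof. by []. Qed.
Definition hdiag := locked_with hdiag_key (fun u => weyl true u * weyl true (-1)).
Canonical hdiag_unlockable := [unlockable fun hdiag].
Lemma hdiagE u : hdiag u = weyl true u * weyl true (-1).
Proof. by rewrite unlock. Qed.

Fact symbol_key : unit. Proof. by []. Qed.
Definition symbol := locked_with symbol_key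
  (fun u v => hdiag u * hdiag v * (hdiag (u * v)%R)^-1).
Canonical symbol_unlockable := [unlockable fun symbol].
Lemma symbolE u v : symbol u v = hdiag u * hdiag v * (hdiag (u * v)%R)^-1.
Proof. by rewrite unlock. Qed.

Hypothesis xD : forall ij s t, x ij s * x ij t = x ij (s + t).
Hypothesis weyl_conj : forall ij u t, u \is a GRing.unit ->
  weyl ij u * x ij t * weyl ij (- u) = x (~~ ij) (- u ^- 2 * t)%R.
Hypothesis gen_ind : forall P : G -> Prop, P 1 -> (forall ij t, P (x ij t)) ->
  (forall g h, P g -> P h -> P (g * h)) -> (forall g, P g -> P g^-1) -> forall g, P g.

Lemma x0 ij : x ij 0 = 1.
Proof. by apply: (@mulgI _ (x ij 0)); rewrite xD addr0 mulg1. Qed.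

Lemma xV ij t : (x ij t)^-1 = x ij (- t).
Proof. by apply: mulg1_eq; rewrite xD subrr x0. Qed.

Lemma weylV ij u : (weyl ij u)^-1 = weyl ij (- u).
Proof. by rewrite !weylE !invgM !xV invrN !opprK mulgA. Qed.

Lemma xJweyl ij u t : u \is a GRing.unit ->
  x ij t ^ weyl ij u = x (~~ ij) (- u ^- 2 * t)%R.
Proof.
move=> Uu; rewrite conjgE weylV mulgA -[in weyl ij u](opprK u).
by rewrite weyl_conj ?unitrN // sqrrN.
Qed.

Lemma xJweyl_opp ij u s : u \is a GRing.unit ->
  x (~~ ij) s ^ weyl ij u = x ij (- u ^+ 2 * s)%R.
Proof.
move=> Uu; rewrite -[RHS](conjgKV (weyl ij u)) weylV xJweyl ?unitrN //.
by rewrite sqrrN !mulNr mulrN opprK mulKr // unitrX.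
Qed.

Lemma weyl_opp ij u : u \is a GRing.unit -> weyl ij u = weyl (~~ ij) (- u^-1)%R.
Proof.
move=> Uu; have := conjgC (x ij u) (weyl ij u).
rewrite xJweyl // mulNr -exprVn expr2 -mulrA mulVr // mulr1 => comm_xw.
rewrite [RHS]weylE negbK invrN opprK invrK; apply: (@mulgI _ (x ij u)).
by rewrite [LHS]comm_xw weylE !mulgA.
Qed.

Definition w0 := weyl false (-1).

Lemma w0_weyl12 : w0 = weyl true 1.
Proof. by rewrite /w0 weyl_opp ?unitrN1 // invrN1 opprK. Qed.

Lemma xJw0 ij t : x ij t ^ w0 = x (~~ ij) (- t).
Proof.
case: ij; last by rewrite /w0 xJweyl ?unitrN1 // sqrrN expr1n invr1 mulN1r.
by rewrite /w0 (xJweyl_opp false) ?unitrN1 // sqrrN expr1n mulN1r.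
Qed.

Lemma xJw0V ij t : x ij t ^ w0^-1 = x (~~ ij) (- t).
Proof. by rewrite -[in LHS](negbK ij) -[in LHS](opprK t) -[in LHS]xJw0 conjgK. Qed.

Lemma central_fix_gens z : (forall ij t, x ij t ^ z = x ij t) -> central z.
Proof.
move=> fix_z; apply: gen_ind => [|ij t|g h|g]; first exact: commute1.
- exact/commute_of_conjg/fix_z.
- exact: commuteM.
- exact: commuteV.
Qed.

Lemma central_w0w0 : central (w0 * w0).
Proof. by apply: central_fix_gens => ij t; rewrite conjgM !xJw0 negbK opprK. Qed.

Lemma w0_x ij t : w0 * x ij t = x (~~ ij) (- t) * w0.
Proof. by rewrite conjgCV xJw0V. Qed.

Lemma weyl12_m1 : weyl true (-1) = w0^-1.
Proof. by rewrite w0_weyl12 weylV. Qed.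

Lemma hdiag_w0 u : hdiag u * w0 = weyl true u.
Proof. by rewrite hdiagE weyl12_m1 mulgVK. Qed.

Lemma xJhdiag ij u t : u \is a GRing.unit ->
  x ij t ^ hdiag u = x ij ((if ij then u^-1 else u) ^+ 2 * t)%R.
Proof.
move=> Uu; rewrite hdiagE weyl12_m1 conjgM; case: ij.
  by rewrite xJweyl // xJw0V mulNr opprK exprVn.
by rewrite (xJweyl_opp true) // xJw0V mulNr opprK.
Qed.

Lemma xJhdiagV ij u t : u \is a GRing.unit ->
  x ij t ^ (hdiag u)^-1 = x ij ((if ij then u^-1 else u) ^- 2 * t)%R.
Proof.
move=> Uu; have Ud : (if ij then u^-1 else u)%R \is a GRing.unit by case: ij; rewrite ?unitrV.
by rewrite -[in LHS](mulVKr (unitrX 2 Ud) t) -xJhdiag // conjgK.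
Qed.

Lemma mulr_sqK (a b t : A) : a \is a GRing.unit -> b \is a GRing.unit ->
  ((a * b) ^- 2 * (b ^+ 2 * (a ^+ 2 * t)) = t)%R.
Proof.
by move=> Ua Ub; rewrite mulrA -exprMn [(b * a)%R]mulrC mulKr // unitrX // unitrM Ua.
Qed.

Lemma central_symbol u v : u \is a GRing.unit -> v \is a GRing.unit ->
  central (symbol u v).
Proof.
move=> Uu Uv; apply: central_fix_gens => ij t.
rewrite symbolE !conjgM !xJhdiag // xJhdiagV ?unitrM ?Uu //; congr (x _ _).
case: ij; last exact: mulr_sqK.
by rewrite [((u * v)^-1)%R]invrM // [(v^-1 * u^-1)%R]mulrC mulr_sqK ?unitrV.
Qed.

Fact gamma_eps_key : unit. Proof. by []. Qed.
Definition gamma_eps := locked_with gamma_eps_key (fun a => w0 * x false a).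
Canonical gamma_eps_unlockable := [unlockable fun gamma_eps].
Lemma gamma_epsE a : gamma_eps a = w0 * x false a.
Proof. by rewrite unlock. Qed.

Fact gamma_heps_key : unit. Proof. by []. Qed.
Definition gamma_heps := locked_with gamma_heps_key
  (fun u => gamma_eps (- u) * gamma_eps (- u^-1)%R * gamma_eps (- u)).
Canonical gamma_heps_unlockable := [unlockable fun gamma_heps].
Lemma gamma_hepsE u :
  gamma_heps u = gamma_eps (- u) * gamma_eps (- u^-1)%R * gamma_eps (- u).
Proof. by rewrite unlock. Qed.

Lemma gamma_epsEr a : gamma_eps a = x true (- a) * w0.
Proof. by rewrite gamma_epsE w0_x. Qed.

Lemma gamma_heps_weyl u : gamma_heps u = w0 * w0 * weyl true u * w0.
Proof.
rewrite gamma_hepsE (gamma_epsEr (- u)) opprK gamma_epsE !mulgA.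
rewrite -(mulgA (x true u) w0 w0).
by rewrite -(central_w0w0 (x true u)) weylE !mulgA.
Qed.

Lemma gamma_eps_add a b :
  gamma_eps a * gamma_eps 0 * gamma_eps b = gamma_heps (-1) * gamma_eps (a + b).
Proof.
rewrite gamma_heps_weyl weyl12_m1 mulgVK !gamma_epsE x0 mulg1 !mulgA.
rewrite -(mulgA _ w0 w0).
by rewrite -(mulgA w0) -(central_w0w0 (x false a)) !mulgA -(mulgA _ (x false a)) xD.
Qed.

Lemma symbol_m1V : (symbol (-1) (-1))^-1 = w0 * w0 * (w0 * w0).
Proof.
rewrite symbolE !hdiagE mulrNN mulr1 weyl12_m1 -w0_weyl12 mulgV invg1 mulg1.
by rewrite !invgM !invgK !mulgA.
Qed.

Lemma central_symbol_m1V : central (symbol (-1) (-1))^-1.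
Proof. by rewrite symbol_m1V; apply: centralM; apply: central_w0w0. Qed.

Lemma gamma_heps_hdiag u : gamma_heps u = (symbol (-1) (-1))^-1 * hdiag u.
Proof.
rewrite gamma_heps_weyl symbol_m1V -hdiag_w0 !mulgA -(mulgA (w0 * w0 * hdiag u)).
by rewrite -(central_w0w0 (w0 * w0 * hdiag u)) !mulgA.
Qed.

Lemma hdiagM u v : hdiag u * hdiag v = symbol u v * hdiag (u * v)%R.
Proof. by rewrite symbolE mulgVK. Qed.

Lemma gamma_heps_mul u v : u \is a GRing.unit -> v \is a GRing.unit ->
  gamma_heps u * gamma_heps v =
    gamma_heps (u * v)%R * ((symbol (-1) (-1))^-1 * symbol u v).
Proof.
move=> Uu Uv; rewrite !gamma_heps_hdiag; set K := (symbol _ _)^-1.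
rewrite -mulgA (mulgA (hdiag u)) -(central_symbol_m1V (hdiag u)) -/K -mulgA hdiagM.
rewrite (central_symbol Uu Uv) -[RHS]mulgA [hdiag _ * (_ * _)]mulgA.
by rewrite -(central_symbol_m1V (hdiag _)) !mulgA.
Qed.

Lemma hdiag_weyl u : hdiag u = weyl true u / w0.
Proof. by rewrite hdiagE weyl12_m1. Qed.

Lemma hdiag1 : hdiag 1 = 1.
Proof. by rewrite hdiag_weyl -w0_weyl12 mulgV. Qed.

Lemma weyl_x_opp ij u s : u \is a GRing.unit ->
  weyl ij u * x (~~ ij) s = x ij (- u ^+ 2 * s)%R * weyl ij u.
Proof. by move=> Uu; rewrite conjgCV weylV xJweyl_opp ?unitrN // sqrrN. Qed.

Lemma hdiagJw0V u : u \is a GRing.unit -> hdiag u ^ w0^-1 = hdiag u^-1%R.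
Proof.
move=> Uu; rewrite !hdiag_weyl conjMg [w0^-1 ^ _]conjgE invgK mulVKg.
rewrite weylE !conjMg !xJw0V /=.
by rewrite (weyl_opp true) ?unitrV // weylE /= invrN invrK !opprK.
Qed.

Lemma weyl_sq u : u \is a GRing.unit ->
  weyl true u * weyl true u = symbol u u^-1%R * (w0 * w0).
Proof.
move=> Uu; rewrite -hdiag_w0.
have -> : hdiag u * w0 * (hdiag u * w0) = hdiag u * hdiag u ^ w0^-1 * (w0 * w0).
  by rewrite conjgE invgK !mulgA mulgVK.
by rewrite hdiagJw0V // hdiagM mulrV // hdiag1 mulg1.
Qed.

Lemma hdiag_gamma_eps_conj u a : u \is a GRing.unit ->
  hdiag u * gamma_eps a * hdiag u = symbol u u^-1%R * gamma_eps (u ^+ 2 * a)%R.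
Proof.
move=> Uu; have Uu' : (u^-1)%R \is a GRing.unit by rewrite unitrV.
rewrite (gamma_epsE a) mulgA hdiag_w0 (weyl_x_opp true) // hdiag_weyl !mulgA.
rewrite -(mulgA (x true _)) weyl_sq // mulgA -(central_symbol Uu Uu').
by rewrite !mulgA mulgK gamma_epsEr mulNr !mulgA.
Qed.

Lemma gamma_heps_conj u a : u \is a GRing.unit ->
  gamma_heps u * gamma_eps a * gamma_heps u = gamma_eps (u ^+ 2 * a)%R *
    (symbol u u^-1%R * ((symbol (-1) (-1))^-1 * (symbol (-1) (-1))^-1)).
Proof.
move=> Uu; have Uu' : (u^-1)%R \is a GRing.unit by rewrite unitrV.
rewrite !gamma_heps_hdiag; set K := (symbol _ _)^-1; rewrite !mulgA.
rewrite -(central_symbol_m1V (K * hdiag u * gamma_eps a)) -/K !mulgA.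
rewrite -(mulgA (K * K)) -(mulgA (K * K)).
rewrite hdiag_gamma_eps_conj // (central_symbol Uu Uu') mulgA -(mulgA (K * K)).
by rewrite (centralM central_symbol_m1V central_symbol_m1V) !mulgA.
Qed.

Lemma gamma_eps_x12 t : gamma_eps (- t) / gamma_eps 0 = x true t.
Proof.
by rewrite !gamma_epsE x0 mulg1 -[in RHS](opprK t) -(xJw0V false) conjgE invgK mulgA.
Qed.

Lemma gamma_eps_x21 t : (gamma_eps 0)^-1 * gamma_eps t = x false t.
Proof. by rewrite !gamma_epsE x0 mulg1 mulKg. Qed.
End Steinberg.

Section SteinbergWords.
Local Open Scope group_scope.
Variables (A : comUnitRingType) (G : groupType) (x : bool -> A -> G).
Local Notation evx := (eval_word (fun p => x p.1 p.2)).

Lemma eval_ww ij u : evx (ww ij u) = weyl x ij u.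
Proof. by rewrite weylE !eval_word_cat !eval_word_letter mulgA. Qed.

Lemma eval_h12 u : evx (h12 u) = hdiag x u.
Proof. by rewrite hdiagE eval_word_cat !eval_ww. Qed.

Lemma eval_cw u v : evx (cw u v) = symbol x u v.
Proof.
rewrite /cw eval_word_cat eval_h12 eval_word_cat eval_h12 eval_word_inv eval_h12.
by rewrite symbolE mulgA.
Qed.

Lemma eval_gamma w : evx (gamma w) = eval_word (gamma_eps x) w.
Proof.
rewrite eval_word_subst; apply: eq_eval_word => a.
by rewrite eval_word_cat eval_ww eval_word_letter gamma_epsE.
Qed.

Lemma eval_hC u : eval_word (gamma_eps x) (hC u) = gamma_heps x u.
Proof. by rewrite gamma_hepsE !eval_word_cat !eval_word_letter mulgA. Qed.
End SteinbergWords.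

(** * Consequences of the relations of C(A) *)

Section EpsRelations.
Local Open Scope group_scope.
Variables (A : comUnitRingType) (G : groupType) (e : A -> G).
Implicit Types (u v s t a b : A) (ij : bool).

Fact heps_key : unit. Proof. by []. Qed.
Definition heps := locked_with heps_key (fun u => e (- u) * e (- u^-1)%R * e (- u)).
Canonical heps_unlockable := [unlockable fun heps].

Hypothesis heps_mul : forall u v, u \is a GRing.unit -> v \is a GRing.unit ->
  heps u * heps v = heps (u * v)%R.
Hypothesis eps_add : forall a b, e a * e 0 * e b = heps (-1) * e (a + b).
Hypothesis heps_conj : forall u a, u \is a GRing.unit ->
  heps u * e a * heps u = e (u ^+ 2 * a)%R.
Hypothesis gen_ind : forall P : G -> Prop, P 1 -> (forall a, P (e a)) ->
  (forall g h, P g -> P h -> P (g * h)) -> (forall g, P g -> P g^-1) -> forall g, P g.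

Local Notation z := (heps (-1)).

Lemma hepsE u : heps u = e (- u) * e (- u^-1)%R * e (- u).
Proof. by rewrite unlock. Qed.

Lemma heps1 : heps 1 = 1.
Proof. by apply: (@mulgI _ (heps 1)); rewrite heps_mul ?unitr1 // mulr1 mulg1. Qed.

Lemma heps_m1_sq : z * z = 1.
Proof. by rewrite heps_mul ?unitrN1 // mulrNN mulr1 heps1. Qed.

Lemma central_heps_m1 : central z.
Proof.
apply: gen_ind => [|a|g h|g]; [exact: commute1 | | exact: commuteM | exact: commuteV].
have := heps_conj a (unitrN1 A); rewrite sqrrN expr1n mul1r => zez.
by rewrite /commute -{2}zez -mulgA heps_m1_sq mulg1.
Qed.

Lemma eps0_sq : e 0 * e 0 = z.
Proof. by apply: (@mulIg _ (e 0)); rewrite eps_add addr0. Qed.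

Lemma eps0V : (e 0)^-1 = z * e 0.
Proof. by apply: mulg1_eq; rewrite central_heps_m1 mulgA eps0_sq heps_m1_sq. Qed.

Lemma eps0VV : (e 0)^-1 * (e 0)^-1 = z.
Proof. by rewrite -invgM eps0_sq; apply: mulg1_eq heps_m1_sq. Qed.

Lemma eps_addV a b : e a / e 0 * e b = e (a + b).
Proof.
rewrite eps0V mulgA -(central_heps_m1 (e a)) -!mulgA (mulgA (e a)) eps_add.
by rewrite mulgA heps_m1_sq mul1g.
Qed.

Lemma eps0_conj t : e 0 * e (- t) * e 0 = (e t)^-1.
Proof.
apply: (@mulgI _ (e t)); rewrite mulgV !mulgA eps_add subrr.
by rewrite -mulgA eps0_sq heps_m1_sq.
Qed.

Lemma hepsV u : u \is a GRing.unit -> (heps u)^-1 = heps u^-1%R.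
Proof. by move=> Uu; apply: mulg1_eq; rewrite heps_mul ?unitrV // mulrV // heps1. Qed.

Lemma hepsN u : u \is a GRing.unit -> heps (- u) = heps u * z.
Proof. by move=> Uu; rewrite heps_mul ?unitrN1 // mulrN1. Qed.

Lemma heps_conjV u t : u \is a GRing.unit ->
  heps u * (e t)^-1 * heps u = (e (u ^- 2 * t)%R)^-1.
Proof.
move=> Uu; have Uu' : (u^-1)%R \is a GRing.unit by rewrite unitrV.
by rewrite -exprVn -heps_conj // !invgM hepsV // invrK mulgA.
Qed.

Lemma epsV_eps0 s : (e s)^-1 * e 0 = (e 0)^-1 * e (- s).
Proof.
rewrite -eps0_conj -!mulgA eps0_sq -(central_heps_m1 (e (- s))) mulgA -(central_heps_m1 (e 0)).
by rewrite eps0V.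
Qed.

Lemma eps0_epsV s : e 0 * (e (- s))^-1 = e s / e 0.
Proof.
rewrite -eps0_conj opprK !mulgA eps0_sq (central_heps_m1 (e s)).
by rewrite eps0V !mulgA.
Qed.

(* The images of x_12(t) and x_21(t) under the inverse delta of gamma. *)
Fact x_eps_key : unit. Proof. by []. Qed.
Definition x_eps := locked_with x_eps_key
  (fun ij t => if ij then e (- t) / e 0 else (e 0)^-1 * e t).
Canonical x_eps_unlockable := [unlockable fun x_eps].

Lemma x_eps12 t : x_eps true t = e (- t) / e 0.
Proof. by rewrite unlock. Qed.

Lemma x_eps21 t : x_eps false t = (e 0)^-1 * e t.
Proof. by rewrite unlock. Qed.

Lemma x_eps_add ij s t : x_eps ij s * x_eps ij t = x_eps ij (s + t).
Proof.
case: ij; first by rewrite !x_eps12 mulgA eps_addV opprD.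
by rewrite !x_eps21 -mulgA (mulgA (e s)) eps_addV.
Qed.

Lemma weyl_eps12 u : weyl x_eps true u = heps u * e 0.
Proof.
rewrite weylE x_eps12 x_eps21 /= !mulgA -(mulgA (e (- u))) eps0VV eps0V.
rewrite -(central_heps_m1 (e (- u))) !mulgA -(central_heps_m1 (_ * e (- u))) !mulgA.
rewrite heps_m1_sq mul1g.
by rewrite hepsE.
Qed.

Lemma weyl_eps21 u : weyl x_eps false u = e 0 * heps (- u).
Proof.
rewrite weylE x_eps12 x_eps21 /= opprK !mulgA -(mulgA (_ * e (u^-1)%R)) eps0VV eps0V.
rewrite -(central_heps_m1 (_ * e (u^-1)%R)) !mulgA heps_m1_sq mul1g.
by rewrite hepsE invrN !opprK !mulgA.
Qed.

Lemma x_eps_weyl ij u t : u \is a GRing.unit ->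
  weyl x_eps ij u * x_eps ij t * weyl x_eps ij (- u) = x_eps (~~ ij) (- u ^- 2 * t)%R.
Proof.
move=> Uu; case: ij => /=.
  rewrite !weyl_eps12 hepsN // x_eps12 x_eps21 [in LHS]eps0V !mulgA.
  rewrite -(central_heps_m1 (_ * e (- t))) !mulgA -(central_heps_m1 (_ * heps u)) !mulgA.
  rewrite heps_m1_sq mul1g.
  rewrite -(mulgA (heps u) (e 0)) -(mulgA (heps u)) eps0_conj heps_conjV //.
  by rewrite epsV_eps0 mulNr.
rewrite !weyl_eps21 opprK hepsN // x_eps12 x_eps21 [in LHS]eps0V !mulgA.
rewrite -(mulgA _ z z) heps_m1_sq mulg1 -[in e t](opprK t) -(mulgA (e 0 * heps u) (e 0)).
rewrite -(mulgA (e 0 * heps u)) eps0_conj -!(mulgA (e 0)) heps_conjV // mulrN.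
by rewrite eps0_epsV mulNr opprK.
Qed.

Lemma gamma_x_eps a : gamma_eps x_eps a = e a.
Proof. by rewrite gamma_epsE /w0 weyl_eps21 opprK heps1 mulg1 x_eps21 mulVKg. Qed.

Lemma hdiag_eps u : hdiag x_eps u = heps u.
Proof.
rewrite hdiagE !weyl_eps12 !mulgA -(central_heps_m1 (_ * e 0)) !mulgA.
by rewrite -(mulgA _ (e 0) (e 0)) eps0_sq -(central_heps_m1 (z * _)) mulgA heps_m1_sq mul1g.
Qed.

Lemma symbol_eps u v : u \is a GRing.unit -> v \is a GRing.unit ->
  symbol x_eps u v = 1.
Proof. by move=> Uu Uv; rewrite symbolE !hdiag_eps heps_mul // mulgV. Qed.
End EpsRelations.

(** * Evaluation in SL_2 *)

Section SL2.
Variable A : comUnitRingType.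
Implicit Types a b c d : A.

Lemma mx2M a b c d a' b' c' d' :
  mx2 a b c d *m mx2 a' b' c' d' =
  mx2 (a * a' + b * c') (a * b' + b * d') (c * a' + d * c') (c * b' + d * d').
Proof.
apply/matrixP => i j; rewrite !mxE !big_ord_recr big_ord0 /= !mxE /= add0r.
by case: i => [[|[|i]] Hi] //; case: j => [[|[|j]] Hj].
Qed.

Lemma mx2_1 : 1%:M = mx2 1 0 0 1 :> 'M[A]_2.
Proof.
apply/matrixP => i j; rewrite !mxE.
by case: i => [[|[|i]] Hi] //; case: j => [[|[|j]] Hj].
Qed.

Lemma mx_eval_cat (X : Type) (f : X -> 'M[A]_2) u v :
  mx_eval f (u ++ v) = mx_eval f u *m mx_eval f v.
Proof. by elim: u => [|p u IHu] /=; rewrite ?mul1mx // IHu mulmxA. Qed.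

Section UnitEval.
Variables (X : Type) (f : X -> 'M[A]_2).
Hypothesis f_unit : forall x, f x \in unitmx.

Lemma mx_eval_unit w : mx_eval f w \in unitmx.
Proof.
elim: w => [|[x b] w IHw] /=; first exact: unitmx1.
by rewrite unitmx_mul IHw andbT; case: b; rewrite ?unitmx_inv.
Qed.

Lemma mx_eval_inv w : mx_eval f (inv_word w) = invmx (mx_eval f w).
Proof.
elim: w => [|[x b] w IHw] /=; first by rewrite invmx1.
have fxb_unit : (if b then invmx (f x) else f x) \in unitmx.
  by case: b; rewrite ?unitmx_inv.
rewrite -cat1s inv_word_cat mx_eval_cat IHw /= mulmx1.
(* ['M[A]_2] is a unit ring whose inverse is [invmx]. *)
rewrite [RHS](invrM fxb_unit (mx_eval_unit w)).
by case: b {fxb_unit} => //=; rewrite mulmxE invrK.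
Qed.

Lemma mx_eval_subst (Y : Type) (g : Y -> word X) w :
  mx_eval f (subst_word g w) = mx_eval (fun y => mx_eval f (g y)) w.
Proof.
elim: w => [|[y b] w IHw] //=; rewrite -cat1s subst_word_cat mx_eval_cat IHw.
by rewrite /subst_word /= cats0; case: b; rewrite ?mx_eval_inv.
Qed.
End UnitEval.

Lemma eq_mx_eval (X : Type) (f f' : X -> 'M[A]_2) :
  f =1 f' -> mx_eval f =1 mx_eval f'.
Proof. by move=> ff' w; elim: w => [|[x b] w IHw] //=; rewrite IHw ff'. Qed.

Lemma x_mx_unit (p : bool * A) : x_mx p \in unitmx.
Proof.
suff /mulmx1_unit[] : x_mx p *m x_mx (p.1, - p.2) = 1%:M by [].
by case: p => [[] t]; rewrite /x_mx /= mx2M mx2_1; congr mx2; ring.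
Qed.

Lemma eps_mxK a : eps_mx a *m mx2 0 (-1) 1 a = 1%:M.
Proof. by rewrite /eps_mx mx2M mx2_1; congr mx2; ring. Qed.

Lemma eps_mx_unit a : eps_mx a \in unitmx.
Proof. by case/mulmx1_unit: (eps_mxK a). Qed.

Lemma invmx_eps_mx a : invmx (eps_mx a) = mx2 0 (-1) 1 a.
Proof. by rewrite -[LHS]mulmx1 -(eps_mxK a) mulmxA mulVmx ?eps_mx_unit // mul1mx. Qed.
End SL2.

Section Main.
Variable A : comUnitRingType.

Definition delta_gen (p : bool * A) : word A :=
  if p.1 then epsw (- p.2) ++ inv_word (epsw 0) else inv_word (epsw 0) ++ epsw p.2.
Definition delta := subst_word delta_gen.

Lemma phi_gamma_gen (a : A) : phi_St (gamma_gen a) = eps_mx a.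
Proof.
rewrite /phi_St /gamma_gen /ww /xw /letter /= invrN1 opprK mulmx1 /x_mx /=.
by rewrite !mx2M /eps_mx; congr mx2; ring.
Qed.

Lemma C_to_SL2_delta_gen (p : bool * A) : C_to_SL2 (delta_gen p) = x_mx p.
Proof.
by case: p => [[] t]; rewrite /C_to_SL2 /= !mulmx1 invmx_eps_mx /eps_mx /x_mx /= mx2M;
  congr mx2; ring.
Qed.

Local Open Scope group_scope.
Local Notation clSt := (wclass (@St_rel A)).
Local Notation clC := (wclass (@C_rel A)).
Implicit Types (u v a b t : A) (w : word A) (c : word (bool * A)).

Definition xSt ij t := clSt (xw ij t).

Lemma wclass_St c : clSt c = eval_word (fun p => xSt p.1 p.2) c.
Proof. by rewrite wclass_eval; apply: eq_eval_word => -[]. Qed.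

Lemma xSt_add ij s t : xSt ij s * xSt ij t = xSt ij (s + t).
Proof. by rewrite -wclass_cat; apply: wclass_rel; left; exists ij, s, t. Qed.

Lemma xSt_weyl ij u t : u \is a GRing.unit ->
  weyl xSt ij u * xSt ij t * weyl xSt ij (- u) = xSt (~~ ij) (- u ^- 2 * t)%R.
Proof.
move=> Uu; rewrite -!eval_ww -(eval_word_letter (fun p => xSt p.1 p.2) (ij, t)).
rewrite -!eval_word_cat -!wclass_St -catA.
by apply: wclass_rel; right; exists ij, u, t.
Qed.

Lemma St_ind (P : presented (@St_rel A) -> Prop) :
  P 1 -> (forall ij t, P (xSt ij t)) ->
  (forall g h, P g -> P h -> P (g * h)) -> (forall g, P g -> P g^-1) ->
  forall g, P g.
Proof. by move=> P1 Px; apply: presented_ind => // -[ij t]; apply: Px. Qed.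

Definition epsC a := clC (epsw a).

Lemma wclass_hC u : clC (hC u) = heps epsC u.
Proof. by rewrite hepsE !wclass_cat mulgA. Qed.

Lemma epsC_heps_mul u v : u \is a GRing.unit -> v \is a GRing.unit ->
  heps epsC u * heps epsC v = heps epsC (u * v)%R.
Proof.
move=> Uu Uv; rewrite -!wclass_hC -wclass_cat.
by apply: wclass_rel; left; exists u, v.
Qed.

Lemma epsC_add a b : epsC a * epsC 0 * epsC b = heps epsC (-1) * epsC (a + b).
Proof.
rewrite -!wclass_hC -!wclass_cat -catA.
by apply: wclass_rel; right; left; exists a, b.
Qed.

Lemma epsC_heps_conj u a : u \is a GRing.unit ->
  heps epsC u * epsC a * heps epsC u = epsC (u ^+ 2 * a)%R.
Proof.
move=> Uu; rewrite -!wclass_hC -!wclass_cat -catA.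
by apply: wclass_rel; right; right; exists u, a.
Qed.

Lemma C_ind (P : presented (@C_rel A) -> Prop) :
  P 1 -> (forall a, P (epsC a)) ->
  (forall g h, P g -> P h -> P (g * h)) -> (forall g, P g -> P g^-1) ->
  forall g, P g.
Proof. by move=> P1 Pe; apply: presented_ind. Qed.

Definition units2 : pred ((A * A) * bool) :=
  fun p => (p.1.1 \is a GRing.unit) && (p.1.2 \is a GRing.unit).
Definition cw_word (s : word (A * A)) := subst_word (fun uv => cw uv.1 uv.2) s.

Definition in_C2 g := exists2 s, all units2 s & clSt (cw_word s) = g.

Lemma in_C2_1 : in_C2 1.
Proof. by exists [::]. Qed.

Lemma in_C2M g h : in_C2 g -> in_C2 h -> in_C2 (g * h).
Proof.
move=> [s Us <-] [s' Us' <-]; exists (s ++ s'); first by rewrite all_cat Us.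
by rewrite /cw_word subst_word_cat wclass_cat.
Qed.

Lemma in_C2V g : in_C2 g -> in_C2 g^-1.
Proof.
move=> [s Us <-]; exists (inv_word s); first by rewrite /inv_word all_rev all_map.
by rewrite /cw_word subst_word_inv wclass_inv.
Qed.

Lemma in_C2_symbol u v : u \is a GRing.unit -> v \is a GRing.unit ->
  in_C2 (symbol xSt u v).
Proof.
move=> Uu Uv; exists [:: ((u, v), false)]; first by rewrite /= /units2 /= Uu Uv.
rewrite wclass_subst eval_word_cons eval_word_nil mulg1.
by rewrite -[eval_letter _ _]/(clSt (cw u v)) wclass_St eval_cw.
Qed.

Lemma central_in_C2 g : in_C2 g -> central g.
Proof.
move=> [s Us <-]; rewrite wclass_subst.
apply: (central_eval_word Us) => -[[u v] b] /andP[/= Uu Uv].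
have cuv := central_symbol xSt_add xSt_weyl St_ind Uu Uv.
by rewrite /eval_letter wclass_St eval_cw; case: b => //=; apply: centralV.
Qed.

Lemma wclass_gamma w : clSt (gamma w) = eval_word (gamma_eps xSt) w.
Proof. by rewrite wclass_St eval_gamma. Qed.

Lemma gamma_C_rel l r : C_rel l r ->
  in_C2 ((eval_word (gamma_eps xSt) r)^-1 * eval_word (gamma_eps xSt) l).
Proof.
have Um1 : (-1 : A) \is a GRing.unit by rewrite unitrN1.
case=> [[u [v [Uu [Uv [-> ->]]]]] | [[a [b [-> ->]]] | [u [a [Uu [-> ->]]]]]].
- rewrite eval_word_cat !eval_hC (gamma_heps_mul xSt_add xSt_weyl St_ind Uu Uv) mulKg.
  by apply: in_C2M; [apply/in_C2V/in_C2_symbol | apply: in_C2_symbol].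
- rewrite eval_word_cat eval_hC !eval_word_cat !eval_word_letter [gamma_eps xSt a * _]mulgA.
  by rewrite (gamma_eps_add xSt_add xSt_weyl St_ind) mulVg; apply: in_C2_1.
- rewrite eval_word_cat eval_hC eval_word_cat eval_hC !eval_word_letter.
  rewrite [gamma_heps xSt u * _]mulgA.
  rewrite (gamma_heps_conj xSt_add xSt_weyl St_ind _ Uu) mulKg.
  apply: in_C2M; first by apply: in_C2_symbol; rewrite ?unitrV.
  by apply: in_C2M; apply/in_C2V/in_C2_symbol.
Qed.

Lemma gamma_C_eqv w w' : C_eqv w w' ->
  in_C2 ((clSt (gamma w'))^-1 * clSt (gamma w)).
Proof.
rewrite !wclass_gamma; elim=> {w w'} [w | w w' _ | w1 w2 w3 _ S12 _ S23 | p q x b | p q l r].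
- by rewrite mulVg; apply: in_C2_1.
- by move/in_C2V; rewrite invgM invgK.
- by rewrite -(mulgK (eval_word (gamma_eps xSt) w2) (_^-1)) -mulgA; apply: in_C2M.
- by rewrite eval_word_free mulVg; apply: in_C2_1.
move=> /gamma_C_rel S; have /central_in_C2 cS := S.
rewrite !eval_word_cat; set Q := eval_word _ q.
by rewrite invgM -mulgA mulKg invgM !mulgA -[Q^-1 / _ * _]mulgA -(cS Q^-1) mulgVK.
Qed.

Lemma gamma_congr w w' : C_eqv w w' -> StC_eqv (gamma w) (gamma w').
Proof.
move=> /gamma_C_eqv[s Us Ec]; exists (cw_word s); split; first by exists s.
by apply/wclass_eqP; rewrite wclass_cat Ec mulVKg.
Qed.

Lemma wclass_delta c : clC (delta c) = eval_word (fun p => x_eps epsC p.1 p.2) c.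
Proof.
rewrite wclass_subst; apply: eq_eval_word => -[[] t];
  by rewrite /= wclass_cat wclass_inv ?x_eps12 ?x_eps21.
Qed.

Lemma delta_congr c c' : St_eqv c c' -> C_eqv (delta c) (delta c').
Proof.
move=> Ecc'; apply/wclass_eqP; rewrite !wclass_delta; move: Ecc'.
apply: eval_word_eqv => l r [[ij [s [t [-> ->]]]] | [ij [u [t [Uu [-> ->]]]]]].
  rewrite eval_word_cat !eval_word_letter.
  exact: (x_eps_add epsC_heps_mul epsC_add epsC_heps_conj C_ind).
rewrite eval_word_cat eval_ww eval_word_cat eval_ww !eval_word_letter mulgA.
exact: (x_eps_weyl epsC_heps_mul epsC_add epsC_heps_conj C_ind).
Qed.

Lemma delta_gamma w : C_eqv (delta (gamma w)) w.
Proof.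
apply/wclass_eqP; rewrite wclass_delta eval_gamma [RHS]wclass_eval.
apply: eq_eval_word => a.
exact: (gamma_x_eps epsC_heps_mul epsC_add epsC_heps_conj C_ind).
Qed.

Lemma delta_C2 c : C2_word c -> C_eqv (delta c) [::].
Proof.
move=> [s [Us ->]]; apply/wclass_eqP; rewrite wclass_delta wclass_nil.
rewrite -[flatten _]/(cw_word s) eval_word_subst.
apply: (eval_word_eq1 Us) => -[[u v] b] /andP[/= Uu Uv].
rewrite /eval_letter eval_cw (symbol_eps epsC_heps_mul epsC_add epsC_heps_conj C_ind Uu Uv).
by case: b; rewrite ?invg1.
Qed.

Lemma gamma_inj w w' : StC_eqv (gamma w) (gamma w') -> C_eqv w w'.
Proof.
move=> [c [C2c /delta_congr]]; rewrite /delta subst_word_cat -/(delta c) => Ew.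
apply: pe_trans (pe_sym (delta_gamma w)) (pe_trans Ew _).
by have := pres_eqv_cat (delta_gamma w') (delta_C2 C2c); rewrite cats0.
Qed.

Lemma gamma_delta c : StC_eqv (gamma (delta c)) c.
Proof.
exists [::]; split; first by exists [::].
apply/wclass_eqP; rewrite cats0 wclass_gamma [RHS]wclass_St eval_word_subst.
apply: eq_eval_word => -[[] t]; rewrite /= eval_word_cat eval_word_inv !eval_word_letter.
  exact: (gamma_eps_x12 xSt_add xSt_weyl).
exact: (gamma_eps_x21 xSt_add).
Qed.

Lemma gamma_in_K2 w : in_U w -> in_K2 (gamma w).
Proof.
rewrite /in_U /in_K2 /phi_St mx_eval_subst; last exact: x_mx_unit.
by move=> <-; apply: eq_mx_eval => a; exact: phi_gamma_gen.
Qed.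

Lemma delta_in_U c : in_K2 c -> in_U (delta c).
Proof.
rewrite /in_U /in_K2 /C_to_SL2 mx_eval_subst; last exact: eps_mx_unit.
by move=> <-; apply: eq_mx_eval => p; exact: C_to_SL2_delta_gen.
Qed.
End Main.

Theorem theoremA14 (A : comUnitRingType) :
  (* gamma is well defined on C(A) -> St(2,A)/C(2,A) *)
  (forall w w' : word A, C_eqv w w' -> StC_eqv (gamma w) (gamma w')) /\
  (* gamma is injective *)
  (forall w w' : word A, StC_eqv (gamma w) (gamma w') -> C_eqv w w') /\
  (* gamma is surjective *)
  (forall v : word (bool * A), exists w : word A, StC_eqv (gamma w) v) /\
  (* gamma maps U(A) into K_2(2,A)/C(2,A) *)
  (forall w : word A, in_U w ->
     exists v : word (bool * A), in_K2 v /\ StC_eqv (gamma w) v) /\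
  (* and onto K_2(2,A)/C(2,A) *)
  (forall v : word (bool * A), in_K2 v ->
     exists w : word A, in_U w /\ StC_eqv (gamma w) v).
Proof.
split; first exact: gamma_congr.
split; first exact: gamma_inj.
split; first by move=> v; exists (delta v); apply: gamma_delta.
split.
  move=> w Uw; exists (gamma w); split; first exact: gamma_in_K2.
  by apply: gamma_congr; apply: pe_refl.
by move=> v Kv; exists (delta v); split; [apply: delta_in_U | apply: gamma_delta].
Qed.
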